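(* Let $G=(V,E,L)$ be a graph with loops, $V=[n]$, $L=L^-\cup L^+$ with $L^+\neq\emptyset$. Let $\{i,i\}\in L^+$, let $M\subseteq N(i)$ with $i\in M$, $d:=|M|$. Let $S^i_M$ be the set of $(x,Y)$, $x\in\mathbb{R}^n$, $Y$ symmetric $n\times n$, for which there exist auxiliary values $z_S$ ($S\subseteq M$, $|S|\ge3$) such that, with $z_k:=x_k$ for $k\in M$, $z_{\{k,l\}}:=Y_{kl}$ for distinct $k,l\in M$, $z_{ii}:=Y_{ii}$, $z_\emptyset:=1$, $$z_{ii}\ \ge\sum_{J\subseteq M:\, i\in J}\frac{\big(\ell_d(J,M\setminus J)\big)^2}{\ell_{d-1}(J\setminus\{i\},M\setminus J)},\qquad \ell_d(J,M\setminus J)\ge 0\quad\forall J\subseteq M.$$ Then: (i) if $|M|=2$, then $\mathcal{C}^{\rm SDP+MC}_n\subseteq S^i_M$; (ii) if $|M|>2$, then $\mathcal{C}^{\rm SDP+MC+Tri}_n\not\subseteq S^i_M$.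
   Context: A graph with loops is $G=(V,E,L)$: $V$ finite node set, $E$ a set of unordered pairs of distinct nodes, $L$ a set of loops $\{i,i\}$ partitioned as $L=L^-\cup L^+$ (minus/plus loops). $N(i):=\{j\in V:\{i,j\}\in E\cup L\}$ (so $i\in N(i)$ for a loop $\{i,i\}$). For disjoint $J_1,J_2$ with $|J_1\cup J_2|=d$, $\ell_d(J_1,J_2):=\sum_{t\subseteq J_2}(-1)^{|t|}z_{J_1\cup t}$, where $z_{\{k\}}=z_k$. Each $u^2/v$ denotes the closed perspective: $u^2/v$ if $v>0$, $0$ if $u=v=0$, $+\infty$ if $u\neq0,v=0$. $\mathcal{C}^{\rm SDP}_n$ is the set of $(x,Y)$, $x\in[0,1]^n$, $Y$ symmetric $n\times n$, with $\begin{bmatrix}1&x^\top\\ x&Y\end{bmatrix}\succeq0$ and $Y_{kk}\le x_k$ for all $k$. $\mathcal{C}^{\rm SDP+MC}_n$ adds, for all $1\le k<l\le n$, the McCormick inequalities $Y_{kl}\ge0$, $Y_{kl}\ge x_k+x_l-1$, $Y_{kl}\le x_k$, $Y_{kl}\le x_l$. $\mathcal{C}^{\rm SDP+MC+Tri}_n$ further adds, for all $1\le k<l<m\le n$, the triangle inequalities $Y_{kl}+Y_{km}\le x_k+Y_{lm}$, $Y_{kl}+Y_{lm}\le x_l+Y_{km}$, $Y_{km}+Y_{lm}\le x_m+Y_{kl}$, $x_k+x_l+x_m-Y_{kl}-Y_{km}-Y_{lm}\le1$. *)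

From HB Require Import structures.
From mathcomp Require Import all_boot all_order all_algebra.
From mathcomp Require Import reals constructive_ereal.
Set Implicit Arguments. Unset Strict Implicit. Unset Printing Implicit Defensive.
Import Order.TTheory GRing.Theory Num.Theory.
Local Open Scope ring_scope.

Section Defs.
Variables (R : realType) (n : nat).

(* Graph with loops on V = 'I_n: edge relation e (symmetric, irreflexive:
   unordered pairs of distinct nodes) and loop sets Lm (minus) / Lp (plus). *)
Definition nbhd (e : rel 'I_n) (Lm Lp : {set 'I_n}) (i : 'I_n) : {set 'I_n} :=
  [set j | e i j || ((j == i) && (i \in Lm :|: Lp))].

Definition psd (m : nat) (A : 'M[R]_m) : Prop :=
  forall v : 'cV[R]_m, 0 <= (v^T *m A *m v) 0 0.

Definition lifted (x : 'cV[R]_n) (Y : 'M[R]_n) : 'M[R]_(1 + n) :=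
  block_mx (1%:M : 'M[R]_1) x^T x Y.

Definition C_SDP (x : 'cV[R]_n) (Y : 'M[R]_n) : Prop :=
  [/\ forall k, 0 <= x k 0 <= 1,
      Y^T = Y,
      psd (lifted x Y) &
      forall k, Y k k <= x k 0].

Definition McCormick (x : 'cV[R]_n) (Y : 'M[R]_n) : Prop :=
  forall k l : 'I_n, (k < l)%N ->
    [/\ 0 <= Y k l, x k 0 + x l 0 - 1 <= Y k l, Y k l <= x k 0 & Y k l <= x l 0].

Definition Triangle (x : 'cV[R]_n) (Y : 'M[R]_n) : Prop :=
  forall k l m : 'I_n, (k < l)%N -> (l < m)%N ->
    [/\ Y k l + Y k m <= x k 0 + Y l m,
        Y k l + Y l m <= x l 0 + Y k m,
        Y k m + Y l m <= x m 0 + Y k l &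
        x k 0 + x l 0 + x m 0 - Y k l - Y k m - Y l m <= 1].

Definition C_SDP_MC x Y := C_SDP x Y /\ McCormick x Y.
Definition C_SDP_MC_Tri x Y := [/\ C_SDP x Y, McCormick x Y & Triangle x Y].

Definition zval (x : 'cV[R]_n) (Y : 'M[R]_n) (w : {set 'I_n} -> R)
  (S : {set 'I_n}) : R :=
  match enum S with
  | [::] => 1
  | [:: k] => x k 0
  | [:: k; l] => Y k l
  | _ => w S
  end.

Definition ell (z : {set 'I_n} -> R) (J1 J2 : {set 'I_n}) : R :=
  \sum_(t in powerset J2) (-1) ^+ #|t| * z (J1 :|: t).

(* closed perspective u^2/v, as an extended real
   (+oo also for v < 0, which never occurs under the constraints ell >= 0) *)
Definition persp (u v : R) : \bar R :=
  if 0 < v then (u ^+ 2 / v)%:E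
  else if (u == 0) && (v == 0) then 0%E else +oo%E.

Definition S_set (i : 'I_n) (M : {set 'I_n}) (x : 'cV[R]_n) (Y : 'M[R]_n) : Prop :=
  Y^T = Y /\
  exists w : {set 'I_n} -> R,
    let z := zval x Y w in
    (forall J : {set 'I_n}, J \subset M -> 0 <= ell z J (M :\: J)) /\
    (\sum_(J in powerset M | i \in J)
        persp (ell z J (M :\: J)) (ell z (J :\ i) (M :\: J)) <= (Y i i)%:E)%E.

End Defs.

From HB Require Import structures.
From mathcomp Require Import all_boot all_order all_algebra.
From mathcomp Require Import reals constructive_ereal.
From mathcomp Require Import ring lra.
Import Order.TTheory GRing.Theory Num.Theory.
Local Open Scope ring_scope.

(* (i) For [M = {i, j}] the constraints of [S^i_M] are the McCormick inequalities and
   [Y_ii >= (x_i - Y_ij)^2 / (1 - x_j) + Y_ij^2 / x_j]. The right-hand side is the Schur-complement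
   bound given by the positive semidefinite lifted matrix on the coordinates [0, i, j], once [Y_jj]
   is replaced by the larger [x_j].
   (ii) For [|M| > 2] pick distinct [i, j, k] in [M]. Summing [ell(J, M \ J)] over the supersets
   [J] of [S] recovers [z_S] (Moebius inversion). Writing [J = {i} \cup T], the identity
   [- 2 z_i + 2 z_ij + 2 z_ik - z_jk = 1/4] says that the sum over [T \supseteq {j, k}] of
   [2 ell(J, M \ J) - ell(T, M \ J)] is [1/4] plus twice a sum of nonnegative [ell]'s. As
   [u^2 / v >= 2 u - v], the perspective sum defining [S^i_M] is then at least [1/4], whereas the
   point below has [Y_ii = 1/5]. *)

Section PowersetSums.
Context {T : finType}.
Implicit Types (x : T) (A J : {set T}).

Lemma setD1_notin x A : x \notin A -> A :\ x = A.
Proof. by move=> xA; apply/setDidPl; rewrite disjoint_sym disjoints1. Qed.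

Lemma subsetU1_notin x A J : x \notin J -> (J \subset x |: A) = (J \subset A).
Proof. by move=> xJ; rewrite -subDset setD1_notin. Qed.

Lemma subset_set2P x y J : J \subset [set x; y] ->
  [\/ J = set0, J = [set x], J = [set y] | J = [set x; y]].
Proof.
rewrite -subDset subset1 => /orP[]/eqP JD; have [xJ|xJ] := boolP (x \in J).
- by apply: Or44; rewrite -(setD1K xJ) JD.
- by apply: Or43; rewrite -JD setD1_notin.
- by apply: Or42; rewrite -(setD1K xJ) JD setU0.
- by apply: Or41; rewrite -JD setD1_notin.
Qed.

Lemma notin_subset [x A J] : x \notin A -> J \subset A -> x \notin J.
Proof. by move=> xA /subsetP JA; apply: contra xA => /JA. Qed.

Lemma setU1D x A J : x \notin J -> (x |: A) :\: J = x |: (A :\: J).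
Proof. by move=> xJ; apply/setP => y; rewrite !inE; case: eqP => // ->; rewrite xJ. Qed.

Lemma setU1DU1 x A J : x \notin A -> (x |: A) :\: (x |: J) = A :\: J.
Proof.
move=> xA; apply/setP => y; rewrite !inE.
by case: (y =P x) => [->|] /=; rewrite ?(negbTE xA) ?andbF.
Qed.

Lemma big_powersetU1 (V : nmodType) x A (F : {set T} -> V) : x \notin A ->
  \sum_(J in powerset (x |: A)) F J =
  \sum_(J in powerset A) F J + \sum_(J in powerset A) F (x |: J).
Proof.
move=> xA; rewrite (bigID (fun J => x \notin J)) /=; congr (_ + _).
  apply: eq_bigl => J; rewrite !powersetE andbC.
  case: (boolP (x \in J)) => [xJ|/subsetU1_notin-> //].
  by apply/esym/negbTE; apply: contraL xJ; apply: notin_subset.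
rewrite (reindex_onto (fun J => x |: J) (fun J => J :\ x)) /=; last first.
  by move=> J /andP[_]; rewrite negbK => /setD1K.
apply: eq_bigl => J; rewrite !powersetE subUset sub1set !setU11 /= andbT.
have [xJ|xJ] := boolP (x \in J); last by rewrite setU1K // eqxx andbT subsetU1_notin.
have /negbTE-> : (x |: J) :\ x != J by apply/eqP => /setP/(_ x); rewrite setD11 xJ.
by rewrite andbF; apply/esym/negbTE; apply: contraL xJ; apply: notin_subset.
Qed.

Lemma big_powersetU1_mem (V : nmodType) x A (F : {set T} -> V) : x \notin A ->
  \sum_(J in powerset (x |: A) | x \in J) F J = \sum_(J in powerset A) F (x |: J).
Proof.
move=> xA; rewrite big_mkcondr big_powersetU1 // big1 ?add0r => [|J]; last first.
  by rewrite powersetE => /(notin_subset xA)/negbTE->.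
by apply: eq_bigr => J _; rewrite setU11.
Qed.

Lemma cards2_mem [x A] : x \in A -> #|A| = 2 -> exists2 y, x != y & A = [set x; y].
Proof.
move=> xA; rewrite (cardsD1 x) xA add1n => -[/eqP/cards1P[y Ay]].
exists y; last by rewrite -Ay setD1K.
have /setD1P[yx _] : y \in A :\ x by rewrite Ay set11.
by rewrite eq_sym.
Qed.

End PowersetSums.

Section Perspective.
Context {R : realType}.
Implicit Types (u v : R).

Lemma persp_ge0 u v : (0 <= persp u v)%E.
Proof.
rewrite /persp; case: ifP => [v0|_]; first by rewrite lee_fin divr_ge0 ?sqr_ge0 ?ltW.
by case: ifP => _; rewrite ?leey.
Qed.

Lemma persp_ge_tangent u v : ((2 * u - v)%:E <= persp u v)%E.
Proof.
rewrite /persp; case: ifPn => [v0|v0].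
  rewrite lee_fin -subr_ge0.
  have -> : u ^+ 2 / v - (2 * u - v) = (u - v) ^+ 2 / v by field; rewrite gt_eqF.
  by rewrite divr_ge0 ?sqr_ge0 ?ltW.
case: ifP => [/andP[/eqP-> /eqP->]|_]; last by rewrite leey.
by rewrite lee_fin; lra.
Qed.

Lemma persp_pair_le (xi xj y d : R) :
  0 <= y -> xi + xj - 1 <= y -> y <= xi -> y <= xj ->
  (forall a b, 0 <= a ^+ 2 + 2 * a * (xi + b * xj) + (d + 2 * b * y + b ^+ 2 * xj)) ->
  (persp (xi - y) (1 - xj) + persp y xj <= d%:E)%E.
Proof.
move=> y0 y1 yxi yxj Q.
have sq_le : xi ^+ 2 <= d.
  have := Q (- xi) 0; rewrite !(mul0r, expr0n, addr0, mulr0).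
  have -> : (- xi) ^+ 2 + 2 * - xi * xi + d = d - xi ^+ 2 by ring.
  lra.
have [xj_eq0|xj0] := eqVneq xj 0.
  have -> : y = 0 by lra.
  by rewrite xj_eq0 /persp subr0 ltr01 divr1 ltxx eqxx /= adde0 subr0 lee_fin.
have [xj_eq1|xj1] := eqVneq xj 1.
  have -> : y = xi by lra.
  by rewrite xj_eq1 /persp !subrr ltxx eqxx ltr01 divr1 /= add0e lee_fin.
have xjp : 0 < xj by rewrite lt_neqAle eq_sym xj0; lra.
have xjq : 0 < 1 - xj by rewrite subr_gt0 lt_neqAle xj1; lra.
rewrite /persp xjp xjq -EFinD lee_fin.
(* [(a, b)] minimises the quadratic form of [Q]; the minimum is [d] minus the left-hand side. *)
set a := - (xi - y) / (1 - xj); set b := (xj * xi - y) / (xj * (1 - xj)).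
have -> : (xi - y) ^+ 2 / (1 - xj) + y ^+ 2 / xj =
  d - (a ^+ 2 + 2 * a * (xi + b * xj) + (d + 2 * b * y + b ^+ 2 * xj)).
  by rewrite /a /b; field; rewrite xj0 subr_eq0 eq_sym xj1.
by have := Q a b; lra.
Qed.

End Perspective.

Section Ell.
Context {R : realType} {n : nat} (z : {set 'I_n} -> R).
Implicit Types (x : 'I_n) (A B S M N : {set 'I_n}).

Lemma ell_set0 A : ell z A set0 = z A.
Proof.
rewrite /ell (big_pred1 set0) ?cards0 ?mul1r ?setU0 // => t.
by rewrite /= powersetE subset0.
Qed.

Lemma ellU1 A B x : x \notin B -> ell z A (x |: B) = ell z A B - ell z (x |: A) B.
Proof.
move=> xB; rewrite /ell big_powersetU1 // -sumrN; congr (_ + _).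
apply: eq_bigr => t; rewrite powersetE => tB.
by rewrite cardsU1 (notin_subset xB tB) add1n exprS mulN1r mulNr setUA [A :|: _]setUC.
Qed.

Lemma ell_set1 A x : ell z A [set x] = z A - z (x |: A).
Proof. by have := ellU1 A set0 x (negbT (in_set0 x)); rewrite setU0 !ell_set0. Qed.

Lemma sum_ell_supersets M S : S \subset M ->
  \sum_(J in powerset M | S \subset J) ell z J (M :\: J) = z S.
Proof.
move cMS: #|M :\: S| => k; elim: k M cMS => [|k IH] M.
  move/eqP; rewrite cards_eq0 setD_eq0 => MS SM.
  have -> : M = S by apply/eqP; rewrite eqEsubset MS SM.
  by rewrite (big_pred1 S) ?setDv ?ell_set0 // => J; rewrite /= powersetE eqEsubset.
move=> cM SM; have [x] : exists x, x \in M :\: S by apply/set0Pn; rewrite -card_gt0 cM.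
rewrite inE => /andP[xS xM]; have xMx : x \notin M :\ x by rewrite setD11.
rewrite -(setD1K xM) big_mkcondr big_powersetU1 // -(IH (M :\ x)); first last.
- by rewrite subsetD1 SM xS.
- by move: cM; rewrite (cardsD1 x) inE xS xM => -[<-]; rewrite !setDDl setUC.
rewrite big_mkcondr -big_split; apply: eq_bigr => J; rewrite powersetE => JM.
have xJ := notin_subset xMx JM.
rewrite subsetU1_notin // setU1DU1 // setU1D // ellU1; last by rewrite !inE eqxx /= andbF.
by case: ifP => _ /=; rewrite ?subrK ?addr0.
Qed.

Lemma sum_ell_supersetsU1 x N S : x \notin N -> S \subset x |: N ->
  z S = \sum_(T in powerset N)
          ((if S \subset T then ell z T (N :\: T) - ell z (x |: T) (N :\: T) else 0)
           + (if S \subset x |: T then ell z (x |: T) (N :\: T) else 0)).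
Proof.
move=> xN SN; rewrite -(sum_ell_supersets _ _ SN) big_mkcondr big_powersetU1 // -big_split.
apply: eq_bigr => T; rewrite powersetE => /(notin_subset xN) xT.
by rewrite setU1DU1 // setU1D // ellU1 // inE (negbTE xN) andbF.
Qed.

Lemma sum_persp_ge_tangent x N (P : pred {set 'I_n}) : x \notin N ->
  ((\sum_(T in powerset N)
      (if P T then 2 * ell z (x |: T) (N :\: T) - ell z T (N :\: T) else 0))%:E
   <= \sum_(J in powerset (x |: N) | x \in J)
        persp (ell z J ((x |: N) :\: J)) (ell z (J :\ x) ((x |: N) :\: J)))%E.
Proof.
move=> xN; rewrite -sumEFin big_powersetU1_mem //; apply: lee_sum => T.
rewrite powersetE => /(notin_subset xN) xT; rewrite setU1DU1 // setU1K //.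
by case: ifP => _; [exact: persp_ge_tangent | exact: persp_ge0].
Qed.

End Ell.

Section Lifted.
Context {R : realType} {n : nat}.
Implicit Types (x u : 'cV[R]_n) (Y : 'M[R]_n).

Lemma lifted_quad x Y (a : R) u :
  ((col_mx a%:M u)^T *m lifted x Y *m col_mx a%:M u) 0 0 =
  a ^+ 2 + 2 * a * (x^T *m u) 0 0 + (u^T *m Y *m u) 0 0.
Proof.
set p := (x^T *m u) 0 0; set q := (u^T *m Y *m u) 0 0.
have Exu : x^T *m u = p%:M := mx11_scalar _.
have Eux : u^T *m x = p%:M by rewrite -[x]trmxK -trmx_mul Exu tr_scalar_mx.
have Euyu : u^T *m Y *m u = q%:M := mx11_scalar _.
rewrite tr_col_mx /lifted mul_row_block mul_row_col tr_scalar_mx mulmx1 !mulmxDl.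
rewrite -[_ *m x^T *m u]mulmxA Exu Eux Euyu -!scalar_mxM -!raddfD /= mxE eqxx mulr1n.
ring.
Qed.

Lemma psd_lifted_pair x Y i j (a b : R) : psd (lifted x Y) ->
  0 <= a ^+ 2 + 2 * a * (x i 0 + b * x j 0)
       + (Y i i + b * (Y i j + Y j i) + b ^+ 2 * Y j j).
Proof.
move=> /(_ (col_mx a%:M (delta_mx i 0 + b *: delta_mx j 0))).
rewrite lifted_quad [(_ + _)^T]linearD /= linearZ /= !trmx_delta.
have tr_e r : x^T *m (delta_mx r 0 : 'cV_n) = (x r 0)%:M.
  by rewrite -colE [LHS]mx11_scalar !mxE.
have quad_e r s : (delta_mx 0 r : 'rV_n) *m Y *m (delta_mx s 0 : 'cV_n) = (Y r s)%:M.
  by rewrite -rowE -colE [LHS]mx11_scalar !mxE.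
rewrite mulmxDr -scalemxAr !tr_e !mulmxDl !mulmxDr -!scalemxAl -!scalemxAr !quad_e.
by rewrite !mxE !eqxx !mulr1n; nra.
Qed.

End Lifted.


Section Zval.
Context {R : realType} {n : nat} (x : 'cV[R]_n) (Y : 'M[R]_n) (w : {set 'I_n} -> R).

Lemma zval_set0 : zval x Y w set0 = 1.
Proof. by rewrite /zval enum_set0. Qed.

Lemma zval_set1 u : zval x Y w [set u] = x u 0.
Proof. by rewrite /zval enum_set1. Qed.

Lemma zval_set2 u v : Y^T = Y -> u != v -> zval x Y w [set u; v] = Y u v.
Proof.
move=> sY uv; have symY a b : Y a b = Y b a by rewrite -[in LHS]sY mxE.
have := mem_enum [set u; v]; have := enum_uniq [set u; v].
have : size (enum [set u; v]) = 2 by rewrite -cardE cards2 uv.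
rewrite /zval; case: (enum _) => [|a [|b [|? ?]]] //= _ /andP[]; rewrite inE => ab _ mem.
have aS : a \in [set u; v] by rewrite -mem mem_head.
have bS : b \in [set u; v] by rewrite -mem !inE eqxx orbT.
by move: ab; case/set2P: aS => ->; case/set2P: bS => ->; rewrite ?eqxx.
Qed.

End Zval.

Lemma McCormick_pair {R : realType} {n : nat} [x : 'cV[R]_n] [Y : 'M[R]_n] [i j] :
  Y^T = Y -> McCormick x Y -> i != j ->
  [/\ 0 <= Y i j, x i 0 + x j 0 - 1 <= Y i j, Y i j <= x i 0 & Y i j <= x j 0].
Proof.
move=> sY MC ij; have Yji : Y j i = Y i j by rewrite -[in LHS]sY mxE.
case: (ltngtP i j) => [/MC //|/MC|/val_inj eq_ij]; last by rewrite eq_ij eqxx in ij.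
by rewrite Yji [x j 0 + _]addrC => -[? ? ? ?]; split.
Qed.

Lemma S_set_pair {R : realType} {n : nat} (x : 'cV[R]_n) (Y : 'M[R]_n) i j :
  i != j -> C_SDP_MC x Y -> S_set i [set i; j] x Y.
Proof.
move=> ij [[_ sY psdL Ydiag] MC]; have [Y0 Y1 Yi Yj] := McCormick_pair sY MC ij.
have Yji : Y j i = Y i j by rewrite -[in LHS]sY mxE.
have inj : i \notin [set j] by rewrite in_set1.
have jni : j \notin [set i] by rewrite in_set1 eq_sym.
split=> //; exists (fun=> 0); set z := zval x Y _.
have z0 : z set0 = 1 by rewrite /z zval_set0.
have z1 u : z [set u] = x u 0 by rewrite /z zval_set1.
have zij : z [set i; j] = Y i j by rewrite /z zval_set2.
have zji : z [set j; i] = Y i j by rewrite /z zval_set2 // eq_sym.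
have ell0 : ell z set0 [set i; j] = 1 - x i 0 - x j 0 + Y i j.
  by rewrite ellU1 // !ell_set1 !setU0 z0 !z1 zji; ring.
have elli : ell z [set i] [set j] = x i 0 - Y i j by rewrite ell_set1 z1 zji.
have ellj : ell z [set j] [set i] = x j 0 - Y i j by rewrite ell_set1 z1 zij.
have ellij : ell z [set i; j] set0 = Y i j by rewrite ell_set0.
have Mi : [set i; j] :\ i = [set j] by rewrite setU1K.
have Mj : [set i; j] :\ j = [set i] by rewrite setUC setU1K.
split.
  move=> J /subset_set2P[]->; rewrite ?setD0 ?Mi ?Mj ?setDv ?ell0 ?elli ?ellj ?ellij; lra.
rewrite big_powersetU1_mem //.
rewrite powerset1 big_setU1 ?big_set1 /= ?setU0; last first.
  by rewrite in_set1 eq_sym; apply/eqP => /setP/(_ j); rewrite !inE eqxx.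
rewrite !setDv Mi elli ellij ell_set0 ell_set1 setU0 z0 !z1.
apply: persp_pair_le => // a b.
have := psd_lifted_pair _ _ i j a b psdL; have := ler_wpM2l (sqr_ge0 b) (Ydiag j).
rewrite Yji; lra.
Qed.

Definition indicator {R : pzSemiRingType} {n : nat} (P : pred 'I_n) : 'cV[R]_n :=
  \col_r (P r)%:R.

Lemma quad_outer {R : comPzRingType} {n : nat} (p u : 'cV[R]_n) :
  u^T *m (p *m p^T) *m u = (((p^T *m u) 0 0) ^+ 2)%:M.
Proof.
set s := (p^T *m u) 0 0.
have pu : p^T *m u = s%:M := mx11_scalar _.
have up : u^T *m p = s%:M by rewrite -[p]trmxK -trmx_mul pu tr_scalar_mx.
by rewrite mulmxA -mulmxA up pu -scalar_mxM expr2.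
Qed.

Section BooleanPoints.
Context {R : realType}.
Implicit Types (a b c : bool).

Lemma bool_natr_sq a : a%:R * a%:R = a%:R :> R.
Proof. by case: a; rewrite ?mul1r ?mul0r. Qed.

Lemma McCormick_bool a b :
  [/\ 0 <= a%:R * b%:R :> R, a%:R + b%:R - 1 <= a%:R * b%:R :> R,
      a%:R * b%:R <= a%:R :> R & a%:R * b%:R <= b%:R :> R].
Proof. by case: a; case: b; rewrite /= ?mul1r ?mul0r; split; lra. Qed.

Lemma Triangle_bool a b c :
  [/\ a%:R * b%:R + a%:R * c%:R <= a%:R + b%:R * c%:R :> R,
      a%:R * b%:R + b%:R * c%:R <= b%:R + a%:R * c%:R :> R,
      a%:R * c%:R + b%:R * c%:R <= c%:R + a%:R * b%:R :> R &
      a%:R + b%:R + c%:R - a%:R * b%:R - a%:R * c%:R - b%:R * c%:R <= 1 :> R].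
Proof. by case: a; case: b; case: c; rewrite /= ?mul1r ?mul0r ?mulr1 ?mulr0; split; lra. Qed.

End BooleanPoints.

Section Counterexample.
Context {R : realType} {n : nat} (i j k : 'I_n).
Hypotheses (ij : i != j) (ik : i != k) (jk : j != k).

Local Notation ind P := (indicator P : 'cV[R]_n).

(* The barycentre of the lifted 0/1 points [0], [e_j], [e_k], [e_i + e_j + e_k], with [Y_ii]
   lowered by [1/20]. *)
Definition cex_x : 'cV[R]_n :=
  4^-1 *: (ind (pred1 j) + ind (pred1 k) + ind (pred3 i j k)).

Definition cex_Y : 'M[R]_n :=
  4^-1 *: (ind (pred1 j) *m (ind (pred1 j))^T + ind (pred1 k) *m (ind (pred1 k))^T
           + ind (pred3 i j k) *m (ind (pred3 i j k))^T)
  - 20^-1 *: (ind (pred1 i) *m (ind (pred1 i))^T).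

Lemma indicator_i :
  ind (pred1 i) = ind (pred3 i j k) - ind (pred1 j) - ind (pred1 k).
Proof.
apply/matrixP => r c; rewrite !mxE /=.
have [->|ri] := eqVneq r i; first by rewrite (negbTE ij) (negbTE ik) subr0 subr0.
by have [->|rj] := eqVneq r j; [rewrite (negbTE jk) /= | case: (r == k) => /=]; ring.
Qed.

Lemma psd_cex : psd (lifted cex_x cex_Y).
Proof.
move=> v; rewrite -(vsubmxK v) [usubmx v]mx11_scalar lifted_quad.
set a := usubmx v 0 0; set u := dsubmx v.
pose s P := ((ind P)^T *m u) 0 0.
have ind_u P : (ind P)^T *m u = (s P)%:M := mx11_scalar _.
have xu : (cex_x^T *m u) 0 0 = 4^-1 * (s (pred1 j) + s (pred1 k) + s (pred3 i j k)).
  by rewrite /cex_x linearZ !linearD /= -scalemxAl !mulmxDl !ind_u !mxE !eqxx !mulr1n.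
have uYu : (u^T *m cex_Y *m u) 0 0 =
    4^-1 * (s (pred1 j) ^+ 2 + s (pred1 k) ^+ 2 + s (pred3 i j k) ^+ 2)
    - 20^-1 * s (pred1 i) ^+ 2.
  rewrite /cex_Y mulmxBr mulmxBl -!scalemxAr -!scalemxAl !mulmxDr !mulmxDl !quad_outer.
  by rewrite !ind_u !mxE !eqxx !mulr1n.
have s_i : s (pred1 i) = s (pred3 i j k) - s (pred1 j) - s (pred1 k).
  by rewrite /s indicator_i !linearB /= !mulmxBl !ind_u !mxE !eqxx !mulr1n.
rewrite xu uYu s_i; set sj := s (pred1 j); set sk := s (pred1 k); set sijk := s (pred3 i j k).
(* With [A, B, C, D] the values of [v] on the four lifted vertices, the form is
   [(A^2 + B^2 + C^2 + D^2) / 4 - (D - B - C + A)^2 / 20], a sum of squares. *)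
have -> : a ^+ 2 + 2 * a * (4^-1 * (sj + sk + sijk)) +
    (4^-1 * (sj ^+ 2 + sk ^+ 2 + sijk ^+ 2) - 20^-1 * (sijk - sj - sk) ^+ 2) =
  20^-1 * (a ^+ 2 + (a + sj) ^+ 2 + (a + sk) ^+ 2 + (a + sijk) ^+ 2
    + (a + (a + sj)) ^+ 2 + (a + (a + sk)) ^+ 2 + (a - (a + sijk)) ^+ 2
    + (sj - sk) ^+ 2 + ((a + sj) + (a + sijk)) ^+ 2 + ((a + sk) + (a + sijk)) ^+ 2).
  by field.
by rewrite mulr_ge0 ?invr_ge0 ?ler0n // !addr_ge0 ?sqr_ge0.
Qed.

Lemma cex_x_entry r :
  cex_x r 0 = 4^-1 * ((r == j)%:R + (r == k)%:R + (pred3 i j k r)%:R).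
Proof. by rewrite !mxE. Qed.

Lemma cex_Y_entry r t :
  cex_Y r t = 4^-1 * ((r == j)%:R * (t == j)%:R + (r == k)%:R * (t == k)%:R
                      + (pred3 i j k r)%:R * (pred3 i j k t)%:R)
              - 20^-1 * ((r == i)%:R * (t == i)%:R).
Proof. by rewrite !mxE !big_ord1 !mxE. Qed.

Lemma cex_Y_offdiag r t : r != t ->
  cex_Y r t = 4^-1 * ((r == j)%:R * (t == j)%:R + (r == k)%:R * (t == k)%:R
                      + (pred3 i j k r)%:R * (pred3 i j k t)%:R).
Proof.
rewrite cex_Y_entry => rt; suff -> : (r == i)%:R * (t == i)%:R = 0 :> R by rewrite mulr0 subr0.
case: (r =P i) => [ri|_]; last by rewrite mul0r.
by rewrite -ri eq_sym (negbTE rt) mulr0.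
Qed.

Lemma cex_Y_sym : cex_Y^T = cex_Y.
Proof. by apply/matrixP => r t; rewrite mxE !cex_Y_entry; ring. Qed.

Lemma cex_Y_ii : cex_Y i i = 5^-1.
Proof. by rewrite cex_Y_entry /= eqxx (negbTE ij) (negbTE ik) /=; field. Qed.

Lemma cex_in_SDP_MC_Tri : C_SDP_MC_Tri cex_x cex_Y.
Proof.
split; first split.
- move=> r; rewrite cex_x_entry.
  by case: (r == j); case: (r == k); case: (pred3 i j k r); rewrite /=; lra.
- exact: cex_Y_sym.
- exact: psd_cex.
- move=> r; rewrite cex_x_entry cex_Y_entry !bool_natr_sq.
  by case: (r == j); case: (r == k); case: (pred3 i j k r); case: (r == i); rewrite /=; lra.
- move=> r t rt; rewrite !cex_x_entry cex_Y_offdiag ?neq_ltn ?rt //.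
  have [? ? ? ?] := McCormick_bool (R := R) (r == j) (t == j).
  have [? ? ? ?] := McCormick_bool (R := R) (r == k) (t == k).
  have [? ? ? ?] := McCormick_bool (R := R) (pred3 i j k r) (pred3 i j k t).
  by split; lra.
- move=> r s t rs st; have rt := ltn_trans rs st.
  rewrite !cex_x_entry !cex_Y_offdiag ?neq_ltn ?rs ?st ?rt //.
  have [? ? ? ?] := Triangle_bool (R := R) (r == j) (s == j) (t == j).
  have [? ? ? ?] := Triangle_bool (R := R) (r == k) (s == k) (t == k).
  have [? ? ? ?] := Triangle_bool (R := R) (pred3 i j k r) (pred3 i j k s) (pred3 i j k t).
  by split; lra.
Qed.

Lemma cex_zval w : let z := zval cex_x cex_Y w in
  [/\ z [set i] = 4^-1, z [set i; j] = 4^-1, z [set i; k] = 4^-1 & z [set j; k] = 4^-1].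
Proof.
have [p3i p3j p3k] : [/\ pred3 i j k i, pred3 i j k j & pred3 i j k k].
  by rewrite /= !eqxx !orbT.
have kj : k != j by rewrite eq_sym.
rewrite /= zval_set1 !zval_set2 ?cex_Y_sym // !cex_Y_offdiag // cex_x_entry.
by rewrite p3i p3j p3k !eqxx (negbTE ij) (negbTE ik) (negbTE jk) (negbTE kj) /=; split; field.
Qed.

Lemma cex_notin_S (N : {set 'I_n}) :
  i \notin N -> j \in N -> k \in N -> ~ S_set i (i |: N) cex_x cex_Y.
Proof.
move=> iN jN kN [_ [w []]]; set z := zval cex_x cex_Y w => ell_ge0 hsum.
pose a T := ell z (i |: T) (N :\: T); pose b T := ell z T (N :\: T).
pose g (T : {set 'I_n}) := if (j \in T) && (k \in T) then 2 * a T - b T else 0.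
pose h (T : {set 'I_n}) := if (j \notin T) && (k \notin T) then a T else 0.
have g_le : \sum_(T in powerset N) g T <= 5^-1.
  rewrite -lee_fin -cex_Y_ii; apply: le_trans hsum.
  exact: (sum_persp_ge_tangent z i N (fun T => (j \in T) && (k \in T)) iN).
have h_ge0 : 0 <= \sum_(T in powerset N) h T.
  apply: sumr_ge0 => T; rewrite powersetE => TN; rewrite /h; case: ifP => // _.
  by have := ell_ge0 _ (setUS [set i] TN); rewrite setU1DU1.
have key : \sum_(T in powerset N) (g T - 2 * h T) = 4^-1.
  have [z_i z_ij z_ik z_jk] := cex_zval w.
  have -> : 4^-1 = - 2 * z [set i] + 2 * z [set i; j] + 2 * z [set i; k] - z [set j; k] :> R.
    by rewrite /z z_i z_ij z_ik z_jk; field.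
  rewrite !(sum_ell_supersetsU1 z _ _ _ iN) ?subUset ?sub1set ?setU11 ?setU1r //.
  rewrite !mulr_sumr -sumrN -!big_split; apply: eq_bigr => T.
  rewrite powersetE => /(notin_subset iN) iT.
  rewrite !subUset !sub1set !in_setU1 !eqxx (negbTE iT) ![_ == i]eq_sym (negbTE ij) (negbTE ik).
  by rewrite /g /h /a /b; case: (j \in T); case: (k \in T) => /=; ring.
by move: key; rewrite sumrB -mulr_sumr; lra.
Qed.

End Counterexample.

Theorem proposition7 (R : realType) (n : nat) (e : rel 'I_n)
  (Lm Lp : {set 'I_n}) (i : 'I_n) (M : {set 'I_n}) :
  symmetric e -> irreflexive e -> [disjoint Lm & Lp] ->
  i \in Lp -> M \subset nbhd e Lm Lp i -> i \in M ->
  (#|M| = 2%N -> forall x Y, C_SDP_MC x Y -> @S_set R n i M x Y) /\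
  ((2 < #|M|)%N -> ~ (forall x Y, C_SDP_MC_Tri x Y -> @S_set R n i M x Y)).
Proof.
(* The graph hypotheses only restrict which [M] can occur: both parts hold for any [M] containing [i]. *)
move=> _ _ _ _ _ iM; split.
  by move=> cardM x Y xY; have [j ij ->] := cards2_mem iM cardM; exact: S_set_pair.
move=> cardM S_all; have : (1 < #|M :\ i|)%N by move: cardM; rewrite (cardsD1 i) iM.
case/card_gt1P => j [k [jN kN jk]].
have [ij ik] : i != j /\ i != k by move: jN kN => /setD1P[ji _] /setD1P[ki _]; rewrite !(eq_sym i).
apply: (@cex_notin_S R n i j k ij ik jk (M :\ i)); rewrite ?setD11 ?setD1K //.
exact/S_all/cex_in_SDP_MC_Tri.
Qed.
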